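(* The category $\mathbf{Top}^{\mathrm{op}}$ (the opposite of the category of topological spaces and continuous maps) has finite 2-fold subobject decompositions.
   Context: $\mathbf{Top}^{\mathrm{op}}$ is regular (equivalently $\mathbf{Top}$ is coregular; regular monomorphisms in $\mathbf{Top}$ are embeddings). In a regular category, the image of a subobject under a morphism is given by regular epi–mono factorization. A regular category has finite 2-fold subobject decompositions if for every positive integer $n$, all objects $A_1,\dots,A_n$ and all subobjects $S,T$ of $A_1\times\cdots\times A_n$: if for all $i,j\in\{1,\dots,n\}$ the images of $S$ and $T$ under $(\pi_i,\pi_j):A_1\times\cdots\times A_n\to A_i\times A_j$ coincide, then $S=T$. Dually in $\mathbf{Top}$: for finite coproducts $\bigsqcup_{i}X_i$, any two epimorphisms out of $\bigsqcup_i X_i$ whose (regular-mono part of the) coimage factorizations restricted to each $X_i\sqcup X_j$ agree up to isomorphism are isomorphic under $\bigsqcup_i X_i$. *)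

From HB Require Import structures.
From mathcomp Require Import all_boot all_order.
From mathcomp Require Import boolp classical_sets topology.

Set Implicit Arguments.
Unset Strict Implicit.
Unset Printing Implicit Defensive.

Record category := Category {
  ob :> Type;
  hom : ob -> ob -> Type;
  idm : forall A, hom A A;
  comp : forall A B C, hom B C -> hom A B -> hom A C;
  comp_idl : forall A B (f : hom A B), comp (idm B) f = f;
  comp_idr : forall A B (f : hom A B), comp f (idm A) = f;
  comp_assoc : forall A B C D (h : hom C D) (g : hom B C) (f : hom A B),
      comp h (comp g f) = comp (comp h g) f }.

Arguments idm {c} A.
Arguments comp {c A B C}.

Definition op (C : category) : category :=
  @Category (ob C) (fun A B => hom B A) (fun A => idm A)
    (fun A B C0 g f => comp f g)
    (fun A B f => comp_idr f) (fun A B f => comp_idl f)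
    (fun A B C0 D h g f => esym (comp_assoc f g h)).

Section CatNotions.
Variable C : category.

Definition mono (A B : C) (m : hom A B) : Prop :=
  forall Z (g h : hom Z A), comp m g = comp m h -> g = h.

Definition iso (A B : C) (f : hom A B) : Prop :=
  exists g : hom B A, comp g f = idm A /\ comp f g = idm B.

Definition regular_epi (A B : C) (q : hom A B) : Prop :=
  exists (Z : C) (f g : hom Z A), comp q f = comp q g /\
    forall (W : C) (h : hom A W), comp h f = comp h g ->
      exists! k : hom B W, comp k q = h.

Record subobject (A : C) := Subobject {
  sub_ob : C;
  sub_mono : hom sub_ob A;
  sub_monoP : mono sub_mono }.

Definition same_subobject (A : C) (S T : subobject A) : Prop :=
  exists i : hom (sub_ob S) (sub_ob T),
    iso i /\ comp (sub_mono T) i = sub_mono S.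

(* I is (a representative of) the image of the subobject S under f,
   given by the regular epi - mono factorization of f o m_S. *)
Definition is_image (A B : C) (f : hom A B) (S : subobject A)
    (I : subobject B) : Prop :=
  exists q : hom (sub_ob S) (sub_ob I),
    regular_epi q /\ comp (sub_mono I) q = comp f (sub_mono S).

Definition images_coincide (A B : C) (f : hom A B) (S T : subobject A) : Prop :=
  exists I J : subobject B, is_image f S I /\ is_image f T J /\
    same_subobject I J.

Record product (I : Type) (A : I -> C) := Product {
  prod_ob : C;
  proj : forall i, hom prod_ob (A i);
  tuple : forall X : C, (forall i, hom X (A i)) -> hom X prod_ob;
  proj_tuple : forall X (f : forall i, hom X (A i)) i,
      comp (proj i) (tuple f) = f i;
  tuple_uniq : forall X (h : hom X prod_ob) (f : forall i, hom X (A i)),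
      (forall i, comp (proj i) h = f i) -> h = tuple f }.

Record binproduct (A1 A2 : C) := BinProduct {
  bprod_ob : C;
  bproj1 : hom bprod_ob A1;
  bproj2 : hom bprod_ob A2;
  bpair : forall X : C, hom X A1 -> hom X A2 -> hom X bprod_ob;
  bproj1_pair : forall X (f : hom X A1) (g : hom X A2),
      comp bproj1 (bpair f g) = f;
  bproj2_pair : forall X (f : hom X A1) (g : hom X A2),
      comp bproj2 (bpair f g) = g;
  bpair_uniq : forall X (h : hom X bprod_ob) (f : hom X A1) (g : hom X A2),
      comp bproj1 h = f -> comp bproj2 h = g -> h = bpair f g }.

Definition has_finite_2fold_subobject_decompositions : Prop :=
  forall (n : nat), 0 < n ->
  forall (A : 'I_n -> C) (P : product A)
         (Q : forall i j : 'I_n, binproduct (A i) (A j))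
         (S T : subobject (prod_ob P)),
    (forall i j : 'I_n,
        images_coincide (bpair (Q i j) (proj P i) (proj P j)) S T) ->
    same_subobject S T.

End CatNotions.

Record ctsmap (X Y : topologicalType) := CtsMap {
  ctsfun :> X -> Y;
  ctsfunP : continuous ctsfun }.

Lemma ctsmap_eq (X Y : topologicalType) (f g : ctsmap X Y) :
  ctsfun f = ctsfun g -> f = g.
Proof.
case: f g => f fP [g gP] /= efg; subst g.
by rewrite (Prop_irrelevance fP gP).
Qed.

Definition cts_id (X : topologicalType) : ctsmap X X :=
  @CtsMap X X id (fun x => cvg_id).

Definition cts_comp (X Y Z : topologicalType) (g : ctsmap Y Z)
  (f : ctsmap X Y) : ctsmap X Z :=
  @CtsMap X Z (g \o f)
    (fun x => @continuous_comp X Y Z f g x (@ctsfunP _ _ f x) (@ctsfunP _ _ g (f x))).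

Definition Top : category :=
  @Category topologicalType ctsmap cts_id cts_comp
    (fun A B f => @ctsmap_eq _ _ (cts_comp (cts_id B) f) f erefl)
    (fun A B f => @ctsmap_eq _ _ (cts_comp f (cts_id A)) f erefl)
    (fun A B C D h g f => @ctsmap_eq _ _ (cts_comp h (cts_comp g f)) (cts_comp (cts_comp h g) f) erefl).

(* A subobject of P = A_1 + ... + A_n in Top^op is an epimorphism of Top,
   i.e. a continuous surjection s out of P, and its image under the canonical
   map A_i + A_j -> P is the factorization of the restriction of s into a
   surjection followed by an embedding.  Coinciding images for s and t
   therefore say that on the summands A_i and A_j, t is a continuous function
   of s: it identifies every pair of points that s identifies, and every open
   set of t is pulled back from an open set W_ij of s.  Any two points lie in a
   common pair of summands, so t = phi o s for a function phi, and
   phi^-1(U) = \bigcup_i \bigcap_j W_ij is open because there are finitely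
   many summands.  Symmetrically s = psi o t, and phi and psi are inverse
   homeomorphisms. *)
From Pilot Require Import Defs.
From mathcomp Require Import all_boot topology.
From mathcomp Require Import boolp classical_sets.

Set Implicit Arguments.
Unset Strict Implicit.
Unset Printing Implicit Defensive.

Local Open Scope classical_set_scope.

Lemma images_coincide_sym (C : category) (A B : C) (f : hom A B)
    (S T : subobject A) :
  images_coincide f S T -> images_coincide f T S.
Proof.
move=> [I [J [imI [imJ [i [[j [ji ij]] Ji]]]]]].
exists J, I; split=> //; split=> //; exists j; split; first by exists i.
by rewrite -Ji -comp_assoc ij comp_idr.
Qed.

Lemma open_bigcap_fin (I : finType) (T : topologicalType) (W : I -> set T) :
  (forall i, open (W i)) -> open (\bigcap_i W i).
Proof.
move=> oW; have -> : \bigcap_i W i = \bigcap_(i in [set` enum I]) W i.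
  by congr bigcap; rewrite predeqE => i; rewrite /= mem_enum.
by rewrite bigcap_seq; elim/big_ind: _ => //; [exact: openT | exact: openI].
Qed.

(* [factors_on D s t]: on [D], [t] is [s] followed by a continuous map defined
   on the subspace [s @` D]. *)
Definition factors_on (P : Type) (S T : topologicalType) (D : set P)
    (s : P -> S) (t : P -> T) : Prop :=
  (forall x y, D x -> D y -> s x = s y -> t x = t y) /\
  (forall U : set T, open U ->
     exists2 W : set S, open W & forall x, D x -> W (s x) <-> U (t x)).

Section FactorsOn.
Variables (P : Type) (S T : topologicalType).
Implicit Types (D : set P) (s : P -> S) (t : P -> T).

Lemma factors_onS D D' s t :
  D' `<=` D -> factors_on D s t -> factors_on D' s t.
Proof.
move=> D'D [ker op]; split=> [x y /D'D Dx /D'D Dy|U /op [W oW WU]].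
  exact: ker.
by exists W => // x /D'D /WU.
Qed.

Lemma factors_on_range (X : Type) (f : X -> P) s t :
  factors_on setT (s \o f) (t \o f) -> factors_on (range f) s t.
Proof.
move=> [ker op]; split=> [_ _ [x _ <-] [y _ <-]|U /op [W oW WU]].
  exact: ker.
by exists W => // _ [x _ <-]; exact: WU.
Qed.

Lemma factors_on_comp (T' : topologicalType) (g : T -> T') D s t :
  continuous g -> factors_on D s t -> factors_on D s (g \o t).
Proof.
move=> cg [ker op]; split=> [x y Dx Dy /(ker _ _ Dx Dy) /= -> //|U oU].
exact: op ((continuousP g).1 cg U oU).
Qed.

Lemma factors_on_embedding (q : T -> S) (m : P -> T) :
  injective q ->
  (forall O : set T, open O -> exists2 W, open W & O = q @^-1` W) ->
  factors_on setT (q \o m) m.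
Proof.
move=> qinj qemb; split=> [x y _ _ /qinj //|U /qemb [W oW ->]].
by exists W.
Qed.

Lemma factors_on_cover (I : finType) (C : I -> set P) s t :
  (forall p, exists i, C i p) ->
  (forall i j, factors_on (C i `|` C j) s t) -> factors_on setT s t.
Proof.
move=> cover fij; split=> [x y _ _|U oU].
  have [[i Cix] [j Cjy]] := (cover x, cover y).
  by apply: (fij i j).1; [left | right].
have /all_sig2 [W oW WU] : forall ij : I * I, { W : set S | open W &
    forall x, (C ij.1 `|` C ij.2) x -> W (s x) <-> U (t x) }.
  move=> [i j]; apply/cid2; exact: (fij i j).2.
exists (\bigcup_i \bigcap_j W (i, j)).
  by apply: bigcup_open => i _; apply: open_bigcap_fin => j; exact: oW.
move=> x _; have [k Ckx] := cover x; split=> [[i _ Wi]|Utx].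
  by apply/(WU (i, k) x); [right | exact: Wi].
by exists k => // j _; apply/(WU (k, j) x) => //; left.
Qed.

Lemma factors_on_surj s t : (forall y, exists x, s x = y) ->
  factors_on setT s t -> exists2 phi : S -> T, continuous phi & phi \o s = t.
Proof.
move=> /(_ _)/cid ssurj [ker op].
pose sec y := projT1 (ssurj y).
have secK y : s (sec y) = y by exact: projT2 (ssurj y).
have phisE : (t \o sec) \o s = t.
  by apply/funext => x /=; apply: ker; rewrite ?secK.
exists (t \o sec) => //; apply/continuousP => U /op [W oW WU].
suff -> : (t \o sec) @^-1` U = W by [].
rewrite predeqE => y; have := WU (sec y) I; rewrite secK; exact: iff_sym.
Qed.

End FactorsOn.

Lemma ctsfun_eq (X Y : topologicalType) (f g : ctsmap X Y) : f = g -> f =1 g.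
Proof. by move=> ->. Qed.

(* The initial topology of a constant map is indiscrete. *)
Definition indiscrete_bool : topologicalType :=
  initial_topology (fun _ : bool => false).

Lemma continuous_indiscrete (X : topologicalType) (f : X -> indiscrete_bool) :
  continuous f.
Proof.
apply: (@continuous_comp_initial bool X bool (fun _ => false)).
exact: cst_continuous.
Qed.

Definition indiscrete_map (X : topologicalType) (f : X -> bool) :
    ctsmap X indiscrete_bool :=
  CtsMap (@continuous_indiscrete X f).

(* Every predicate is a continuous map into [indiscrete_bool]; test with the
   indicator of the union of the images. *)
Lemma jointly_epic_surj (I : Type) (X : I -> topologicalType)
    (P : topologicalType) (e : forall i, ctsmap (X i) P) :
  (forall g h : ctsmap P indiscrete_bool,
     (forall i, cts_comp g (e i) = cts_comp h (e i)) -> g = h) ->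
  forall p, exists i x, e i x = p.
Proof.
move=> epic p; apply/asboolP.
pose covered := indiscrete_map (fun q => `[< exists i x, e i x = q >]).
suff /ctsfun_eq /(_ p) : covered = indiscrete_map (fun=> true) by [].
apply: epic => i; apply: ctsmap_eq; apply/funext => x /=.
by apply/asboolP; exists i, x.
Qed.

Lemma same_subobject_of_factors (C : category) (A : C) (S T : subobject A)
    (i : hom (sub_ob S) (sub_ob T)) (j : hom (sub_ob T) (sub_ob S)) :
  Defs.comp (sub_mono T) i = sub_mono S ->
  Defs.comp (sub_mono S) j = sub_mono T -> same_subobject S T.
Proof.
move=> Ti Sj; exists i; split=> //; exists j; split.
  by apply: (@sub_monoP _ _ S); rewrite comp_assoc Sj Ti comp_idr.
by apply: (@sub_monoP _ _ T); rewrite comp_assoc Ti Sj comp_idr.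
Qed.

Local Notation quot S := (@ctsfun _ (sub_ob S) (sub_mono S)).

Lemma opTop_mono_surj (X Y : topologicalType) (s : ctsmap X Y) :
  @mono (op Top) Y X s -> forall y, exists x, s x = y.
Proof.
move=> ms y; have [_ [x sx]] := @jointly_epic_surj unit (fun=> X) Y (fun=> s)
  (fun g h gh => ms _ g h (gh tt)) y.
by exists x.
Qed.

Lemma opTop_product_cover (I : Type) (A : I -> Top) (P : @product (op Top) I A)
    (p : prod_ob P) :
  exists i (a : A i), (proj P i : ctsmap (A i) (prod_ob P)) a = p.
Proof.
apply: jointly_epic_surj => g h gh.
rewrite (@tuple_uniq _ _ _ P _ g _ (fun=> erefl)).
exact: esym (@tuple_uniq _ _ _ P _ h _ (fun i => esym (gh i))).
Qed.

Lemma opTop_regular_epi_lift (X Y W : topologicalType) (q : ctsmap X Y)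
    (h : ctsmap W Y) :
  @regular_epi (op Top) Y X q -> (forall w, exists x, q x = h w) ->
  exists! k : ctsmap W X, cts_comp q k = h.
Proof.
move=> [Z [f [g [fqgq univ]]]] hq; apply: univ.
apply: ctsmap_eq; apply/funext => w /=.
by have [x <-] := hq w; exact: ctsfun_eq fqgq x.
Qed.

Lemma opTop_regular_epi_inj (X Y : topologicalType) (q : ctsmap X Y) :
  @regular_epi (op Top) Y X q -> injective q.
Proof.
move=> rq a b qab; pose cst x : ctsmap X X := CtsMap (cst_continuous (x := x)).
have [k [_ k_uniq]] := @opTop_regular_epi_lift X Y X q
  (CtsMap (cst_continuous (x := q a))) rq (fun=> ex_intro _ a erefl).
have ka : k = cst a by apply: k_uniq; exact: ctsmap_eq.
have kb : k = cst b by apply: k_uniq; apply: ctsmap_eq; apply/funext => x /=.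
exact: ctsfun_eq (etrans (esym ka) kb) a.
Qed.

Lemma opTop_regular_epi_open (X Y : topologicalType) (q : ctsmap X Y) :
  @regular_epi (op Top) Y X q ->
  forall O : set X, open O -> exists2 W : set Y, open W & O = q @^-1` W.
Proof.
move=> rq O oO; pose X' : topologicalType := initial_topology (q : X -> Y).
have [k [qk _]] := @opTop_regular_epi_lift X Y X' q
  (CtsMap (@initial_continuous X Y q)) rq (fun w => ex_intro _ w erefl).
have kE x : k x = x by apply: (opTop_regular_epi_inj rq); exact: ctsfun_eq qk x.
have [W oW WE] := (continuousP _).1 (@ctsfunP X' X k) O oO.
exists W => //; rewrite predeqE => x.
by have /= := congr1 (fun A => A x) WE; rewrite kE => ->.
Qed.

Lemma opTop_images_coincide_factors (P X : topologicalType) (f : ctsmap X P)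
    (S T : @subobject (op Top) P) :
  @images_coincide (op Top) P X f S T ->
  factors_on setT (quot S \o f) (quot T \o f).
Proof.
move=> [I [J [[qI [rqI qIE]] [[qJ [_ qJE]] [i [[j [_ ij]] Ji]]]]]].
have -> : quot S \o f = qI \o quot I.
  by apply/funext => x; exact: esym (ctsfun_eq qIE x).
have -> : quot T \o f = (qJ \o j) \o quot I.
  have jiK y : j (i y) = y by exact: ctsfun_eq ij y.
  apply/funext => x /=; rewrite -(ctsfun_eq Ji x) /= jiK.
  exact: esym (ctsfun_eq qJE x).
apply: factors_on_comp; first exact: ctsfunP (cts_comp qJ j).
apply: factors_on_embedding.
  exact: opTop_regular_epi_inj rqI.
exact: opTop_regular_epi_open rqI.
Qed.

Lemma opTop_subobject_factor n (A : 'I_n -> Top)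
    (P : @product (op Top) 'I_n A)
    (Q : forall i j : 'I_n, @binproduct (op Top) (A i) (A j))
    (S T : @subobject (op Top) (prod_ob P)) :
  (forall i j : 'I_n,
     images_coincide (bpair (Q i j) (proj P i) (proj P j)) S T) ->
  exists phi : ctsmap (sub_ob S) (sub_ob T),
    cts_comp phi (sub_mono S) = sub_mono T.
Proof.
move=> coincide.
pose C i := range (proj P i : ctsmap (A i) (prod_ob P)).
have pair_range i j : C i `|` C j `<=`
    range (bpair (Q i j) (proj P i) (proj P j) : ctsmap _ (prod_ob P)).
  move=> _ [[a _ <-] | [a _ <-]].
    exists (bproj1 (Q i j) a) => //.
    exact: ctsfun_eq (bproj1_pair (Q i j) (proj P i) (proj P j)) a.
  exists (bproj2 (Q i j) a) => //.
  exact: ctsfun_eq (bproj2_pair (Q i j) (proj P i) (proj P j)) a.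
have : factors_on setT (quot S) (quot T).
  apply: (@factors_on_cover _ _ _ _ C) => [p | i j].
    by have [i [a <-]] := opTop_product_cover p; exists i, a.
  apply: factors_onS (pair_range i j) _; apply: factors_on_range.
  exact: opTop_images_coincide_factors.
move=> /(factors_on_surj (opTop_mono_surj (@sub_monoP _ _ S))) [phi cphi phiE].
by exists (CtsMap cphi); exact: ctsmap_eq.
Qed.

Theorem proposition4p12 :
  has_finite_2fold_subobject_decompositions (op Top).
Proof.
move=> n _ A P Q S T coincide.
have [phi phiE] := opTop_subobject_factor coincide.
have [psi psiE] :=
  opTop_subobject_factor (fun i j => images_coincide_sym (coincide i j)).
exact: (@same_subobject_of_factors (op Top) _ S T psi phi).
Qed.
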